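(* Fix $(\mathbf{x},t)$, a unit vector $\mathbf{n}\in\mathbb{R}^N$, a real number $V_{\mathbf{n}}$, constants $\nu>0$, $\lambda>0$, $\mathrm{k}>0$, and $\chi\in\{0,1\}$. Let $\widetilde\rho_0>0$, $\widetilde{\mathbf{u}}_0\in\mathbb{R}^N$, $\widetilde\phi_0$, $\widetilde\mu_0$, $\widetilde\theta_0$ be smooth functions of $\xi\in\mathbb{R}$ satisfying \[ \begin{aligned} &-\partial_\xi\widetilde\rho_0\,V_{\mathbf{n}}+\partial_\xi(\widetilde\rho_0\widetilde{\mathbf{u}}_0)\cdot\mathbf{n}=0,\\ &\partial_\xi\big((\nu+\lambda)\partial_\xi\widetilde{\mathbf{u}}_0\cdot\mathbf{n}\big)\mathbf{n}+\partial_\xi(\nu\partial_\xi\widetilde{\mathbf{u}}_0)+\tfrac14\partial_\xi(\widetilde\phi_0^2-1)^2\,\mathbf{n}-\tfrac12\partial_\xi|\partial_\xi\widetilde\phi_0|^2\,\mathbf{n}=0,\\ &\chi\,\widetilde\rho_0\,\partial_\xi\widetilde\phi_0\,(V_{\mathbf{n}}-\widetilde{\mathbf{u}}_0\cdot\mathbf{n})=\widetilde\mu_0,\\ &\widetilde\rho_0\widetilde\mu_0=-\partial_{\xi\xi}\widetilde\phi_0+\widetilde\phi_0^3-\widetilde\phi_0,\\ &\mathrm{k}\,\partial_{\xi\xi}\widetilde\theta_0+\nu|\partial_\xi\widetilde{\mathbf{u}}_0|^2+(\nu+\lambda)|\partial_\xi\widetilde{\mathbf{u}}_0\cdot\mathbf{n}|^2+\chi\,\widetilde\mu_0^2=0,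 \end{aligned} \] with $\widetilde\rho_0(\pm\infty)=\rho_0^\pm>0$, $\widetilde{\mathbf{u}}_0(\pm\infty)=\mathbf{u}_0^\pm$, $\widetilde\phi_0(\pm\infty)=\pm1$, and $\widetilde\phi_0(0)=0$. Then \[ \widetilde\rho_0(\xi)\big(V_{\mathbf{n}}-\widetilde{\mathbf{u}}_0(\xi)\cdot\mathbf{n}\big)=\rho_0^\pm\big(V_{\mathbf{n}}-\mathbf{u}_0^\pm\cdot\mathbf{n}\big)\ \text{for all }\xi,\qquad \widetilde\phi_0(\xi)=\tanh\Big(\frac{\xi}{\sqrt2}\Big),\qquad \partial_\xi\widetilde{\mathbf{u}}_0\equiv0,\quad \partial_\xi\widetilde\theta_0\equiv0, \] and moreover $V_{\mathbf{n}}-\widetilde{\mathbf{u}}_0\cdot\mathbf{n}\equiv0$ if $\chi=1$, while $\partial_\xi\widetilde\rho_0\,(V_{\mathbf{n}}-\widetilde{\mathbf{u}}_0\cdot\mathbf{n})\equiv0$ if $\chi=0$.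
   Context: This is the zeroth-order inner problem of a matched asymptotic expansion near the interface $\{\phi=0\}$ of a compressible Navier–Stokes/Allen–Cahn system, written in the stretched normal variable $\xi=d/\epsilon$ ($d$ the signed distance to the interface). The case $\chi=1$ corresponds to mobility $M_\epsilon=1$ and $\chi=0$ to $M_\epsilon=1/\epsilon$. As part of the matching with the outer expansion, the $\xi$-derivatives of $\widetilde\rho_0,\widetilde{\mathbf{u}}_0,\widetilde\phi_0,\widetilde\theta_0$ tend to $0$ as $\xi\to\pm\infty$. *)

From HB Require Import structures.
From mathcomp Require Import all_boot all_order all_algebra.
From mathcomp Require Import all_classical all_reals all_analysis.
Set Implicit Arguments. Unset Strict Implicit. Unset Printing Implicit Defensive.
Import Order.TTheory GRing.Theory Num.Theory.
Import numFieldNormedType.Exports.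
Local Open Scope ring_scope.

Definition dotv (R : realType) (N : nat) (a b : 'rV[R]_N) : R :=
  \sum_(i < N) a ord0 i * b ord0 i.

Definition normsq (R : realType) (N : nat) (a : 'rV[R]_N) : R := dotv a a.

Definition smooth (R : realType) (V : normedModType R) (f : R -> V) : Prop :=
  forall (k : nat) (x : R), derivable (derive1n k f) x 1.

Definition tanh (R : realType) (x : R) : R :=
  (expR x - expR (- x)) / (expR x + expR (- x)).

From HB Require Import structures.
From mathcomp Require Import all_boot all_order all_algebra.
From mathcomp Require Import all_classical all_reals all_analysis.
From mathcomp Require Import lra ring.
Import Order.TTheory GRing.Theory Num.Theory.
Import numFieldNormedType.Exports.

Set Implicit Arguments.
Unset Strict Implicit.
Unset Printing Implicit Defensive.

Local Open Scope classical_set_scope.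
Local Open Scope ring_scope.

(* The mass equation says that the flux rho (Vn - u.n) has zero derivative, so
   it is a constant M, and mu = chi M phi'.  The phase equation then reads
   phi'' = phi^3 - phi - chi M rho phi', along which the energy
   E = phi'^2/2 - (phi^2 - 1)^2/4 satisfies (chi M E)' = - rho (chi M phi')^2 <= 0.
   Since E vanishes at both ends, chi M phi' = 0, hence mu = 0 and E' = 0, so
   E = 0.  The momentum equation integrates to
   (nu + lam) (u'.n) n + nu u' = E n = 0, which forces u' = 0, and then the
   energy equation gives theta'' = 0, so theta' = 0.  Finally E = 0 and
   phi(0) = 0 give phi'(0) = c with 2 c^2 = 1; uniqueness for linear ODEs
   (Gronwall) first yields phi' = c (1 - phi^2) and then phi = tanh (c x), and
   phi(+oo) = 1 forces c = 1/sqrt 2. *)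

Section real_derivative.
Variable R : realType.
Implicit Types (f : R -> R) (x l : R).

Lemma derivable_is_derive1 (V : normedModType R) (f : R -> V) x :
  derivable f x 1 -> is_derive x 1 f (derive1 f x).
Proof. by move=> fx; rewrite derive1E; exact: derivableP. Qed.

Lemma derivable1_continuous f : (forall x, derivable f x 1) -> continuous f.
Proof. by move=> df x; exact/differentiable_continuous/derivable1_diffP. Qed.

Lemma is_derive0_cvg (F : set_system R) {FF : ProperFilter F} f l :
  (forall x, is_derive x 1 f 0) -> f x @[x --> F] --> l -> forall x, f x = l.
Proof.
move=> df fl x; have fE : f = cst (f x) by apply/funext => y; exact: is_derive_0_is_cst.
by rewrite fE in fl; exact: cvg_unique (cvg_cst _) fl.
Qed.

Lemma is_derive_le0_cvg f (df : R -> R) l :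
  (forall x, is_derive x 1 f (df x)) -> (forall x, df x <= 0) ->
  f x @[x --> +oo] --> l -> f x @[x --> -oo] --> l -> forall x, f x = l.
Proof.
move=> fdf df_le0 flp flm x.
have nincr y z : y <= z -> f z <= f y.
  move=> yz; apply: (@ler0_derive1_le_cc _ f y z) => //; rewrite ?in_itv/= ?lexx ?yz//.
  - by move=> t _; rewrite derive1E derive_val.
  - exact/continuous_subspaceT/derivable1_continuous => t; case: (fdf t).
apply/eqP; rewrite eq_le; apply/andP; split.
- by apply: (cvgr_to_ge flm); near=> y; apply: nincr.
- by apply: (cvgr_to_le flp); near=> y; apply: nincr.
Unshelve. all: end_near.
Qed.

End real_derivative.

Section dotv.
Variables (R : realType) (N : nat).
Implicit Types (a b v : 'rV[R]_N).

Lemma dotvDl a b v : dotv (a + b) v = dotv a v + dotv b v.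
Proof. by rewrite /dotv -big_split; apply: eq_bigr => i _; rewrite mxE mulrDl. Qed.

Lemma dotvZl (r : R) a v : dotv (r *: a) v = r * dotv a v.
Proof. by rewrite /dotv mulr_sumr; apply: eq_bigr => i _; rewrite mxE mulrA. Qed.

Lemma dotv0l v : dotv 0 v = 0.
Proof. by rewrite -(scale0r 0) dotvZl mul0r. Qed.

Lemma dotv_cvg (T : Type) (F : set_system T) {FF : Filter F} (f : T -> 'rV[R]_N) a v :
  f x @[x --> F] --> a -> dotv (f x) v @[x --> F] --> dotv a v.
Proof.
move=> fa; apply: cvg_big => [|i _]; first exact: add_continuous.
by apply: cvgMr_tmp; apply: (continuous_cvg _ (@coord_continuous R 1 N ord0 i a)).
Qed.

Lemma is_derive_coord (f : R -> 'rV[R]_N) (x : R) (df : 'rV[R]_N) (i : 'I_N) :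
  is_derive x 1 f df -> is_derive x 1 (fun y => f y ord0 i) (df ord0 i).
Proof.
move=> [fx <-]; have /derivable_mxP dfij := fx.
by apply: DeriveDef; [exact: dfij | rewrite derive_mx // mxE].
Qed.

Lemma is_derive_dotv (f : R -> 'rV[R]_N) (x : R) (df v : 'rV[R]_N) :
  is_derive x 1 f df -> is_derive x 1 (fun y => dotv (f y) v) (dotv df v).
Proof.
move=> fx; rewrite /dotv.
have := @is_derive_sum _ _ _ N (fun i y => f y ord0 i * v ord0 i) x 1
  (fun i => df ord0 i * v ord0 i).
rewrite fct_sumE; apply => i.
apply: is_derive_eq (is_deriveM (is_derive_coord i fx) (is_derive_cst (v ord0 i) x 1)) _.
by rewrite scaler0 add0r mulrC.
Qed.

Lemma is_derive0_cvg_rV (F : set_system R) {FF : ProperFilter F}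
    (f : R -> 'rV[R]_N) (l : 'rV[R]_N) :
  (forall x : R, is_derive x 1 f 0) -> f x @[x --> F] --> l -> forall x, f x = l.
Proof.
move=> df fl x; apply/rowP => i.
apply: (is_derive0_cvg _ (continuous_cvg _ (@coord_continuous R 1 N ord0 i l) fl)) => y.
by apply: is_derive_eq (is_derive_coord i (df y)) _; rewrite mxE.
Qed.

End dotv.

Section scale_derivative.
Variables (R : realType) (m p : nat).

Lemma is_derive_scale (r : R -> R) (M : R -> 'M[R]_(m, p)) (x dr : R) (dM : 'M[R]_(m, p)) :
  is_derive x 1 r dr -> is_derive x 1 M dM ->
  is_derive x 1 (fun y => r y *: M y) (dr *: M x + r x *: dM : 'M[R]_(m, p)).
Proof.
move=> [rx <-] [Mx <-]; have /derivable_mxP Mij := Mx.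
have coordE i j : (fun y => (r y *: M y) i j) = r * (fun y => M y i j).
  by apply/funext => y; rewrite mxE.
have rMx : derivable (fun y => r y *: M y) x 1.
  by apply/derivable_mxP => i j; rewrite coordE; exact: (derivableM rx (Mij i j)).
apply: DeriveDef => //; apply/matrixP => i j.
rewrite (derive_mx rMx) (derive_mx Mx) !mxE coordE (deriveM rx (Mij i j)).
by rewrite addrC; congr (_ + _); exact: mulrC.
Qed.

End scale_derivative.

Section linear_ode.
Variables (R : realType) (f a : R -> R).
Implicit Types x y : R.
Hypotheses (fa : forall x, is_derive x 1 f (a x * f x)) (ca : continuous a).

Lemma linear_ode_eq0_right x0 x : f x0 = 0 -> x0 <= x -> f x = 0.
Proof.
move=> fx0 x0x.
have [c _ aB] : exists2 c, c \in `[x0, x] & forall t, t \in `[x0, x] -> `|a t| <= `|a c|.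
  have cna : continuous (fun t => `|a t|) by move=> t; apply: cvg_norm; exact: ca.
  exact/EVT_max/continuous_subspaceT.
set B := `|a c|.
(* B bounds |a| on [x0, x], so there h = expR (- 2 B y) * f^2 is nonincreasing *)
pose h y := expR (- (2 * B) * y) * f y ^+ 2.
have dh y : is_derive y 1 h (expR (- (2 * B) * y) * (2 * (a y - B)) * f y ^+ 2).
  apply: is_derive_eq (is_deriveM (is_derive1_comp (is_derive_expR _) _) (is_deriveX 2 (fa y))) _.
  by rewrite /= [_%:A]mulr1 /GRing.scale /= -[(f ^+ 2) y]/(f y ^+ 2); ring.
have hx : h x <= h x0.
  apply: (@ler0_derive1_le_cc _ h x0 x); rewrite ?in_itv/= ?lexx ?x0x//.
  - move=> t /[1!in_itv]/= /andP[x0t tx]; rewrite derive1E derive_val.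
    have atB : a t <= B by apply: le_trans (ler_norm _) (aB _ _); rewrite in_itv/= !ltW.
    by rewrite -mulrA mulr_ge0_le0 ?expR_ge0// mulr_le0_ge0 ?sqr_ge0// pmulr_rle0// subr_le0.
  - exact/continuous_subspaceT/derivable1_continuous => t; case: (dh t).
move: hx; rewrite /h fx0 expr0n mulr0 pmulr_rle0 ?expR_gt0// => fx_le0.
by apply/eqP; rewrite -sqrf_eq0 eq_le fx_le0 sqr_ge0.
Qed.

End linear_ode.

Lemma linear_ode_eq0 (R : realType) (f a : R -> R) (x0 : R) :
  (forall x : R, is_derive x 1 f (a x * f x)) -> continuous a -> f x0 = 0 ->
  forall x, f x = 0.
Proof.
move=> fa ca fx0 x; have [x0x|xx0] := leP x0 x; first exact: linear_ode_eq0_right fx0 x0x.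
have fNa (y : R) : is_derive y 1 (f \o -%R) (- a (- y) * (f \o -%R) y).
  by apply: is_derive_eq (is_derive1_comp (fa (- y)) (is_deriveNid y 1)) _; rewrite mulrN1 mulNr.
have caN : continuous (fun y => - a (- y)).
  move=> y; apply: continuousN; apply: continuous_comp; first exact: oppr_continuous.
  exact: ca.
rewrite -[x]opprK; apply: (linear_ode_eq0_right fNa caN (x0 := - x0)).
  by rewrite /= opprK.
by rewrite lerN2 ltW.
Qed.

Section tanh.
Variable R : realType.
Implicit Types x y c : R.

Lemma tanhN x : tanh (- x) = - tanh x.
Proof. by rewrite /tanh opprK [in X in _ / X]addrC -opprB mulNr. Qed.

Lemma tanh0 : tanh (0 : R) = 0.
Proof. by rewrite /tanh oppr0 subrr mul0r. Qed.

Lemma tanh_gt0 x : 0 < x -> 0 < tanh x.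
Proof.
move=> x_gt0; apply: divr_gt0; last by rewrite addr_gt0 ?expR_gt0.
by rewrite subr_gt0 ltr_expR gtrN.
Qed.

Lemma is_derive_tanh x : is_derive x 1 (@tanh R) (1 - tanh x ^+ 2).
Proof.
have den_neq0 : expR x + expR (- x) != 0 by rewrite gt_eqF ?addr_gt0 ?expR_gt0.
have dexpN := is_derive1_comp (is_derive_expR (- x)) (is_deriveNid x 1).
apply: is_derive_eq (is_deriveM (is_deriveB (is_derive_expR x) dexpN)
  (is_deriveV (f := fun y => expR y + expR (- y)) den_neq0
     (is_deriveD (is_derive_expR x) dexpN))) _.
by rewrite /tanh /GRing.scale /= -[(expR - _) x]/(expR x - expR (- x)); field.
Qed.

End tanh.

Section allen_cahn.
Variable R : realType.
Implicit Types (phi : R -> R) (x y c l : R).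

Lemma riccati_tanh phi c : (forall x, is_derive x 1 phi (c * (1 - phi x ^+ 2))) ->
  phi 0 = 0 -> forall x, phi x = tanh (c * x).
Proof.
move=> dphi phi0 x; pose T := @tanh R \o *%R c.
have dT y : is_derive y 1 T (c * (1 - T y ^+ 2)).
  by apply: is_derive_eq (is_derive1_comp (is_derive_tanh _) _) _; rewrite [_%:A]mulr1 mulrC.
have cphi : continuous phi by apply: derivable1_continuous => y; case: (dphi y).
have cT : continuous T by apply: derivable1_continuous => y; case: (dT y).
suff DT0 y : phi y - T y = 0 by apply/eqP; rewrite -subr_eq0; apply/eqP; exact: DT0.
apply: (linear_ode_eq0 (f := fun y => phi y - T y) (a := fun y => - c * (phi y + T y)) (x0 := 0)).
- by move=> z; apply: is_derive_eq (is_deriveB (dphi z) (dT z)) _; ring.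
- by move=> z; apply: cvgMl_tmp; exact: cvgD (cphi z) (cT z).
- by rewrite /= phi0 /T /= mulr0 tanh0 subr0.
Qed.

Lemma allen_cahn_riccati phi c :
  (forall x, derivable phi x 1) -> (forall x, derivable (derive1 phi) x 1) ->
  (forall x, derive1n 2 phi x = phi x ^+ 3 - phi x) ->
  2 * c ^+ 2 = 1 -> phi 0 = 0 -> derive1 phi 0 = c ->
  forall x, is_derive x 1 phi (c * (1 - phi x ^+ 2)).
Proof.
move=> dphi ddphi phi_ac c2 phi0 dphi0 x.
suff q0 y : derive1 phi y - c * (1 - phi y ^+ 2) = 0.
  by apply: is_derive_eq (derivable_is_derive1 (dphi x)) _; apply/eqP; rewrite -subr_eq0 q0.
apply: (linear_ode_eq0 (f := fun y => derive1 phi y - c * (1 - phi y ^+ 2))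
  (a := fun y => 2 * c * phi y) (x0 := 0)).
- move=> z; have dphi2 := is_deriveX 2 (derivable_is_derive1 (dphi z)).
  apply: is_derive_eq (is_deriveB (derivable_is_derive1 (ddphi z))
    (is_deriveM (is_derive_cst c z 1) (is_deriveB (is_derive_cst (1 : R) z 1) dphi2))) _.
  rewrite -[derive1 (derive1 phi) z]/(derive1n 2 phi z) phi_ac /GRing.scale /=.
  apply/eqP; rewrite -subr_eq0; apply/eqP.
  transitivity ((1 - 2 * c ^+ 2) * (phi z ^+ 3 - phi z)); first by ring.
  by rewrite c2 subrr mul0r.
- by move=> z; apply: cvgMl_tmp; exact: derivable1_continuous.
- by rewrite phi0 dphi0 expr0n subr0 mulr1 subrr.
Qed.

Definition phase_energy phi x := 2^-1 * derive1 phi x ^+ 2 - 4^-1 * (phi x ^+ 2 - 1) ^+ 2.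

Lemma is_derive_phase_energy phi x :
  derivable phi x 1 -> derivable (derive1 phi) x 1 ->
  is_derive x 1 (phase_energy phi)
    (derive1 phi x * (derive1n 2 phi x - phi x ^+ 3 + phi x)).
Proof.
move=> /derivable_is_derive1 dphi /derivable_is_derive1 ddphi.
apply: is_derive_eq (is_deriveB (is_deriveZ 2^-1 (is_deriveX 2 ddphi))
  (is_deriveZ 4^-1 (is_deriveX 2 (is_deriveB (is_deriveX 2 dphi) (is_derive_cst (1 : R) x 1))))) _.
by rewrite /GRing.scale /= -[(phi ^+ 2 - cst 1) x]/(phi x ^+ 2 - 1); field.
Qed.

Lemma phase_energy_cvg0 (F : set_system R) {FF : Filter F} phi l :
  l ^+ 2 = 1 -> phi x @[x --> F] --> l -> derive1 phi x @[x --> F] --> 0 ->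
  phase_energy phi x @[x --> F] --> 0.
Proof.
move=> l2 phil dphi0; rewrite /phase_energy.
under eq_fun do rewrite !expr2.
have -> : (0 : R) = 2^-1 * (0 * 0) - 4^-1 * ((l * l - 1) * (l * l - 1)).
  by rewrite -(expr2 l) l2 subrr !mulr0 subrr.
apply: cvgB; apply: cvgMl_tmp; first exact: cvgM.
by apply: cvgM; apply: cvgB; try exact: cvg_cst; exact: cvgM.
Qed.

Lemma phase_energy_eq0_slope phi x :
  phase_energy phi x = 0 -> phi x = 0 -> 2 * derive1 phi x ^+ 2 = 1.
Proof. by move=> + phi0; rewrite /phase_energy phi0 expr0n sub0r sqrrN expr1n mulr1; lra. Qed.

Lemma phase_energy_eq0 (F : set_system R) {FF : ProperFilter F} phi l :
  (forall x, derivable phi x 1) -> (forall x, derivable (derive1 phi) x 1) ->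
  (forall x, derive1n 2 phi x = phi x ^+ 3 - phi x) ->
  l ^+ 2 = 1 -> phi x @[x --> F] --> l -> derive1 phi x @[x --> F] --> 0 ->
  forall x, phase_energy phi x = 0.
Proof.
move=> dphi ddphi phi_ac l2 phil dphi0.
apply: is_derive0_cvg (phase_energy_cvg0 l2 phil dphi0) => x.
by apply: is_derive_eq (is_derive_phase_energy (dphi x) (ddphi x)) _; rewrite phi_ac; ring.
Qed.

Lemma allen_cahn_heteroclinic phi :
  (forall x, derivable phi x 1) -> (forall x, derivable (derive1 phi) x 1) ->
  (forall x, derive1n 2 phi x = phi x ^+ 3 - phi x) -> phi 0 = 0 ->
  phi x @[x --> +oo] --> (1 : R) -> derive1 phi x @[x --> +oo] --> (0 : R) ->
  forall x, phi x = tanh (x / Num.sqrt 2).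
Proof.
move=> dphi ddphi phi_ac phi0 phi1 dphi0.
have E0 : forall x, phase_energy phi x = 0.
  exact: phase_energy_eq0 dphi ddphi phi_ac (expr1n _ _) phi1 dphi0.
set c := derive1 phi 0.
have c2 : 2 * c ^+ 2 = 1 := phase_energy_eq0_slope (E0 0) phi0.
have phiE := riccati_tanh (allen_cahn_riccati dphi ddphi phi_ac c2 phi0 erefl) phi0.
have c_gt0 : 0 < c.
  have [t [phit_gt0 t_gt0]] : exists t, 0 < phi t /\ 0 < t.
    near (pinfty_nbhs R) => t; exists t; split; near: t.
      exact: cvgr_gt phi1 _ ltr01.
    exact: nbhs_pinfty_gt.
  have c_neq0 : c != 0.
    by apply/eqP => c0; move: c2; rewrite c0 expr0n mulr0 => /eqP; rewrite eq_sym oner_eq0.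
  rewrite lt_neqAle eq_sym c_neq0 /= leNgt; apply/negP => c_lt0; move: phit_gt0.
  rewrite phiE -[c * t]opprK tanhN oppr_gt0 -mulNr ltNge (ltW (tanh_gt0 _)) //.
  by rewrite mulr_gt0 // oppr_gt0.
have c_sq : c ^+ 2 = 2^-1 by lra.
have -> : Num.sqrt 2 = c^-1 by rewrite -[c]gtr0_norm // -sqrtr_sqr c_sq sqrtrV ?invrK.
by move=> x; rewrite phiE invrK mulrC.
Unshelve. all: end_near.
Qed.

Lemma allen_cahn_damping_eq0 phi (rho : R -> R) c (lp lm : R) :
  (forall x, derivable phi x 1) -> (forall x, derivable (derive1 phi) x 1) ->
  (forall x, 0 < rho x) ->
  (forall x, derive1n 2 phi x = phi x ^+ 3 - phi x - c * rho x * derive1 phi x) ->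
  lp ^+ 2 = 1 -> phi x @[x --> +oo] --> lp -> derive1 phi x @[x --> +oo] --> (0 : R) ->
  lm ^+ 2 = 1 -> phi x @[x --> -oo] --> lm -> derive1 phi x @[x --> -oo] --> (0 : R) ->
  forall x, c * derive1 phi x = 0.
Proof.
move=> dphi ddphi rho_gt0 phi_eq lp2 phip dphip lm2 phim dphim x.
pose Fc y := c * phase_energy phi y.
have dFc y : is_derive y 1 Fc (- (rho y * (c * derive1 phi y) ^+ 2)).
  apply: is_derive_eq (is_deriveZ c (is_derive_phase_energy (dphi y) (ddphi y))) _.
  by rewrite phi_eq /GRing.scale /=; ring.
have Fc0 : Fc = cst 0.
  apply/funext; apply: is_derive_le0_cvg dFc _ _ _ => [y||].
  - by rewrite oppr_le0 mulr_ge0 ?sqr_ge0 // ltW.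
  - by rewrite -(mulr0 c); apply: cvgMl_tmp; exact: phase_energy_cvg0 lp2 phip dphip.
  - by rewrite -(mulr0 c); apply: cvgMl_tmp; exact: phase_energy_cvg0 lm2 phim dphim.
have : rho x * (c * derive1 phi x) ^+ 2 = 0.
  by apply/eqP; rewrite -oppr_eq0; case: (dFc x) => _ <-; rewrite Fc0 derive_cst.
by move/eqP; rewrite mulf_eq0 gt_eqF // sqrf_eq0 => /eqP.
Qed.

End allen_cahn.

Section inner_fluid.
Variables (R : realType) (N : nat) (n : 'rV[R]_N).
Implicit Types (rho : R -> R) (u : R -> 'rV[R]_N) (x V : R).

Lemma lame_eq0 (a b : R) (v : 'rV[R]_N) : dotv n n = 1 -> b != 0 -> a + b != 0 ->
  a * dotv v n *: n + b *: v = 0 -> v = 0.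
Proof.
move=> nn b_neq0 ab_neq0 Lv.
have vn : dotv v n = 0.
  move/(congr1 (fun w => dotv w n)): Lv; rewrite dotvDl !dotvZl nn dotv0l mulr1 -mulrDl.
  by move/eqP; rewrite mulf_eq0 (negPf ab_neq0) => /eqP.
by move: Lv; rewrite vn mulr0 scale0r add0r => /eqP; rewrite scaler_eq0 (negPf b_neq0) => /eqP.
Qed.

Lemma mass_balance rho u V :
  (forall x, derivable rho x 1) -> (forall x, derivable u x 1) ->
  (forall x, - derive1 rho x * V + dotv (derive1 (fun y => rho y *: u y) x) n = 0) ->
  forall x, derive1 rho x * (V - dotv (u x) n) = rho x * dotv (derive1 u x) n.
Proof.
move=> drho du mass x.
have [_ drhou] := is_derive_scale (derivable_is_derive1 (drho x)) (derivable_is_derive1 (du x)).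
have : - derive1 rho x * V + dotv (derive1 rho x *: u x + rho x *: derive1 u x) n = 0.
  by rewrite -(mass x); congr (_ + dotv _ n); symmetry; rewrite derive1E; exact: drhou.
by rewrite dotvDl !dotvZl => balance; rewrite -[RHS]subr0 -balance; ring.
Qed.

Lemma mass_flux_eq_cvg (F : set_system R) {FF : ProperFilter F} rho u V (r : R) (v : 'rV[R]_N) :
  (forall x, derivable rho x 1) -> (forall x, derivable u x 1) ->
  (forall x, - derive1 rho x * V + dotv (derive1 (fun y => rho y *: u y) x) n = 0) ->
  rho x @[x --> F] --> r -> u x @[x --> F] --> v ->
  forall x, rho x * (V - dotv (u x) n) = r * (V - dotv v n).
Proof.
move=> drho du mass rhor uv; apply: (is_derive0_cvg (F := F)) => [x|]; last first.
  by apply: cvgM rhor _; apply: cvgB (cvg_cst _) _; exact: dotv_cvg.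
have du_n := is_derive_dotv n (derivable_is_derive1 (du x)).
apply: is_derive_eq (is_deriveM (derivable_is_derive1 (drho x))
  (is_deriveB (is_derive_cst V x 1) du_n)) _.
rewrite /GRing.scale /= -[(cst V - _) x]/(V - dotv (u x) n) [X in _ + X]mulrC.
by rewrite (mass_balance drho du mass); ring.
Qed.

Lemma momentum_integral (F : set_system R) {FF : ProperFilter F} u (phi : R -> R) (nu lam : R) :
  (forall x, derivable (derive1 u) x 1) ->
  (forall x, derivable phi x 1) -> (forall x, derivable (derive1 phi) x 1) ->
  (forall x,
      (derive1 (fun y => (nu + lam) * dotv (derive1 u y) n) x) *: n
    + derive1 (fun y => nu *: derive1 u y) x
    + (4^-1 * derive1 (fun y => (phi y ^+ 2 - 1) ^+ 2) x) *: n
    - (2^-1 * derive1 (fun y => (derive1 phi y) ^+ 2) x) *: n = 0) ->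
  derive1 u x @[x --> F] --> 0 -> phase_energy phi x @[x --> F] --> 0 ->
  forall x, (nu + lam) * dotv (derive1 u x) n *: n + nu *: derive1 u x = phase_energy phi x *: n.
Proof.
move=> ddu dphi ddphi momentum du0 E0 x; apply/eqP; rewrite -subr_eq0; apply/eqP.
apply: (is_derive0_cvg_rV (F := F)
  (f := fun y => (nu + lam) * dotv (derive1 u y) n *: n + nu *: derive1 u y - phase_energy phi y *: n))
  => [y|]; last first.
  have -> : 0 = (nu + lam) * dotv 0 n *: n + nu *: 0 - 0 *: n :> 'rV[R]_N.
    by rewrite dotv0l mulr0 !scale0r scaler0 addr0 subr0.
  apply: cvgB; last exact: cvgZr_tmp.
  by apply: cvgD; [apply: cvgZr_tmp; apply: cvgMl_tmp; exact: dotv_cvg | exact: cvgZl_tmp].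
have da : derivable (fun z => (nu + lam) * dotv (derive1 u z) n) y 1.
  by case: (is_deriveZ (nu + lam) (is_derive_dotv n (derivable_is_derive1 (ddu y)))).
have dA : derivable (fun z => derive1 phi z ^+ 2) y 1.
  by rewrite -exprfctE; exact: derivableX (ddphi y).
have dB : derivable (fun z => (phi z ^+ 2 - 1) ^+ 2) y 1.
  rewrite -exprfctE; apply: derivableX; change (derivable (phi ^+ 2 - cst 1) y 1).
  exact: derivableB (derivableX (dphi y)) (derivable_cst (1 : R) y 1).
have dE : is_derive y 1 (phase_energy phi) (2^-1 * derive1 (fun z => derive1 phi z ^+ 2) y
    - 4^-1 * derive1 (fun z => (phi z ^+ 2 - 1) ^+ 2) y).
  exact: is_deriveB (is_deriveZ 2^-1 (derivable_is_derive1 dA))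
    (is_deriveZ 4^-1 (derivable_is_derive1 dB)).
have d1 := is_derive_scale (derivable_is_derive1 da) (is_derive_cst n y 1).
have d2 := derivable_is_derive1 (derivableZ (k := nu) (ddu y)).
have d3 := is_derive_scale dE (is_derive_cst n y 1).
apply: is_derive_eq (is_deriveB (is_deriveD d1 d2) d3) _.
apply: etrans (momentum y).
by rewrite !scaler0 !addr0 scalerBl opprB addrA.
Qed.

End inner_fluid.

Theorem lemma2p2 (R : realType) (N : nat) (n : 'rV[R]_N) (Vn nu lam k chi : R)
  (rho : R -> R) (u : R -> 'rV[R]_N) (phi mu theta : R -> R)
  (rhop rhom : R) (up um : 'rV[R]_N) :
  dotv n n = 1 ->
  0 < nu -> 0 < lam -> 0 < k -> (chi = 0 \/ chi = 1) ->
  smooth rho -> smooth u -> smooth phi -> smooth mu -> smooth theta ->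
  (forall xi, 0 < rho xi) ->
  (* the inner equations *)
  (forall xi, - derive1 rho xi * Vn + dotv (derive1 (fun x => rho x *: u x) xi) n = 0) ->
  (forall xi,
      (derive1 (fun x => (nu + lam) * dotv (derive1 u x) n) xi) *: n
    + derive1 (fun x => nu *: derive1 u x) xi
    + (4^-1 * derive1 (fun x => (phi x ^+ 2 - 1) ^+ 2) xi) *: n
    - (2^-1 * derive1 (fun x => (derive1 phi x) ^+ 2) xi) *: n = 0) ->
  (forall xi, chi * rho xi * derive1 phi xi * (Vn - dotv (u xi) n) = mu xi) ->
  (forall xi, rho xi * mu xi = - derive1n 2 phi xi + phi xi ^+ 3 - phi xi) ->
  (forall xi, k * derive1n 2 theta xi + nu * normsq (derive1 u xi)
     + (nu + lam) * (dotv (derive1 u xi) n) ^+ 2 + chi * mu xi ^+ 2 = 0) ->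
  (* far-field behaviour *)
  0 < rhop -> 0 < rhom ->
  rho x @[x --> +oo] --> rhop -> rho x @[x --> -oo] --> rhom ->
  u x @[x --> +oo] --> up -> u x @[x --> -oo] --> um ->
  phi x @[x --> +oo] --> (1 : R) -> phi x @[x --> -oo] --> (-1 : R) ->
  phi 0 = 0 ->
  (* matching: the xi-derivatives vanish at +-infinity *)
  derive1 rho x @[x --> +oo] --> (0 : R) -> derive1 rho x @[x --> -oo] --> (0 : R) ->
  derive1 u x @[x --> +oo] --> (0 : 'rV[R]_N) -> derive1 u x @[x --> -oo] --> (0 : 'rV[R]_N) ->
  derive1 phi x @[x --> +oo] --> (0 : R) -> derive1 phi x @[x --> -oo] --> (0 : R) ->
  derive1 theta x @[x --> +oo] --> (0 : R) -> derive1 theta x @[x --> -oo] --> (0 : R) ->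
  (forall xi, rho xi * (Vn - dotv (u xi) n) = rhop * (Vn - dotv up n)
           /\ rho xi * (Vn - dotv (u xi) n) = rhom * (Vn - dotv um n))
  /\ (forall xi, phi xi = tanh (xi / Num.sqrt 2))
  /\ (forall xi, derive1 u xi = 0)
  /\ (forall xi, derive1 theta xi = 0)
  /\ (chi = 1 -> forall xi, Vn - dotv (u xi) n = 0)
  /\ (chi = 0 -> forall xi, derive1 rho xi * (Vn - dotv (u xi) n) = 0).
Proof.
move=> nn nu_gt0 lam_gt0 k_gt0 _ srho su sphi _ stheta rho_gt0 mass momentum Ephi Emu Etheta
  _ _ rhop_lim rhom_lim up_lim um_lim phip phim phi0 _ _ du_p _ dphip dphim dthetap _.
have drho : forall x, derivable rho x 1 := srho 0%N.
have du : forall x, derivable u x 1 := su 0%N.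
have ddu : forall x, derivable (derive1 u) x 1 := su 1%N.
have dphi : forall x, derivable phi x 1 := sphi 0%N.
have ddphi : forall x, derivable (derive1 phi) x 1 := sphi 1%N.
have ddtheta : forall x, derivable (derive1 theta) x 1 := stheta 1%N.
set M := rhop * (Vn - dotv up n).
have fluxp : forall x, rho x * (Vn - dotv (u x) n) = M.
  exact: mass_flux_eq_cvg drho du mass rhop_lim up_lim.
have fluxm : forall x, rho x * (Vn - dotv (u x) n) = rhom * (Vn - dotv um n).
  exact: mass_flux_eq_cvg drho du mass rhom_lim um_lim.
have phi_damped x : derive1n 2 phi x = phi x ^+ 3 - phi x - chi * M * rho x * derive1 phi x.
  have -> : derive1n 2 phi x = phi x ^+ 3 - phi x - rho x * mu x by rewrite Emu; ring.
  by rewrite -Ephi -(fluxp x); ring.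
have damping0 : forall x, chi * M * derive1 phi x = 0.
  exact: allen_cahn_damping_eq0 dphi ddphi rho_gt0 phi_damped
    (expr1n _ _) phip dphip (sqrr_sign _ 1) phim dphim.
have mu0 x : mu x = 0 by rewrite -Ephi -(damping0 x) -(fluxp x); ring.
have phi_ac x : derive1n 2 phi x = phi x ^+ 3 - phi x by move: (Emu x); rewrite mu0 mulr0; lra.
have E0 : forall x, phase_energy phi x = 0.
  exact: phase_energy_eq0 dphi ddphi phi_ac (expr1n _ _) phip dphip.
have du0 x : derive1 u x = 0.
  apply: (lame_eq0 (a := nu + lam) nn (lt0r_neq0 nu_gt0)); first by rewrite gt_eqF ?addr_gt0.
  rewrite (momentum_integral ddu dphi ddphi momentum du_p) ?E0 ?scale0r //.
  exact: phase_energy_cvg0 (expr1n _ _) phip dphip.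
have dtheta0 : forall x, derive1 theta x = 0.
  apply: (is_derive0_cvg _ dthetap) => x.
  apply: is_derive_eq (derivable_is_derive1 (ddtheta x)) _.
  move: (Etheta x); rewrite du0 mu0 /normsq !dotv0l expr0n !mulr0 !addr0 => /eqP.
  by rewrite mulf_eq0 gt_eqF // => /eqP.
split; first by move=> x; split; [exact: fluxp | exact: fluxm].
split; first exact: allen_cahn_heteroclinic dphi ddphi phi_ac phi0 phip dphip.
split; first exact: du0.
split; first exact: dtheta0.
split=> [chi1 x | _ x]; last by rewrite (mass_balance drho du mass) du0 dotv0l mulr0.
have dphi00 : derive1 phi 0 != 0.
  apply/eqP => dphi00; have := phase_energy_eq0_slope (E0 0) phi0.
  by rewrite dphi00 expr0n mulr0 => /eqP; rewrite eq_sym oner_eq0.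
have /eqP := damping0 0; rewrite chi1 mul1r mulf_eq0 (negPf dphi00) orbF => /eqP M0.
by move/eqP: (fluxp x); rewrite M0 mulf_eq0 gt_eqF //= => /eqP.
Qed.
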